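(* Let $r<s$ be positive integers with $r\ge 2$, and let $x$ be a non-negative integer whose $r$-canonical representation is $[x]^r=\binom{n}{r}+\binom{m}{r-1}+\binom{t}{r-2}$ (so $n>m>t$). Suppose there is an integer $w$ with $\binom{t}{r-2}=\binom{w}{r-1}$, $s-2>t$ and $s-1>w$. Then $$k_s(k_r\le x)=[x]^r_s=\binom{n}{s}+\binom{m}{s-1}.$$ Moreover, for every integer $y$ with $\binom{n}{r}+\binom{m}{r-1}\le y\le x$ we have $k_s(k_r\le y)=[y]^r_s=\binom{n}{s}+\binom{m}{s-1}$.
   Context: All graphs are finite simple graphs. For a graph $g$ and an integer $r>1$, $k_r(g)$ denotes the number of subgraphs of $g$ isomorphic to the complete graph $K_r$ (equivalently, the number of $r$-vertex cliques of $g$). For $r<s$ and a non-negative integer $x$, $k_s(k_r\le x)$ denotes the maximum of $k_s(g)$ over all graphs $g$ with $k_r(g)\le x$. The $r$-canonical representation $[x]^r$ of a non-negative integer $x$ is obtained greedily: choose $a_r$ as large as possible with $\binom{a_r}{r}\le x$, then $a_{r-1}$ as large as possible with $\binom{a_{r-1}}{r-1}\le x-\binom{a_r}{r}$, and so on, until $x=\binom{a_r}{r}+\binom{a_{r-1}}{r-1}+\dots+\binom{a_{r-j}}{r-j}$; one has $a_r>a_{r-1}>\dots>a_{r-j}$. For $r<s$, $[x]^r_s$ denotes the number obtained by replacing $r$ by $s$ in this representation: $[x]^r_s=\binom{a_r}{s}+\binom{a_{r-1}}{s-1}+\dots+\binom{a_{r-j}}{s-j}$. A binomial coefficient whose top entry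 is less than its bottom entry is taken to be $0$. *)

From mathcomp Require Import all_boot.
Set Implicit Arguments. Unset Strict Implicit. Unset Printing Implicit Defensive.

Definition simple_graph (T : finType) (e : rel T) : Prop :=
  symmetric e /\ irreflexive e.

Definition is_clique (T : finType) (e : rel T) (A : {set T}) : bool :=
  [forall x in A, forall y in A, (x != y) ==> e x y].

Definition kcl (T : finType) (e : rel T) (r : nat) : nat :=
  #|[set A : {set T} | (#|A| == r) && is_clique e A]|.

(* "k_s(k_r <= x) = v": v is the maximum of k_s(g) over all finite simple
   graphs g with k_r(g) <= x (attained, and an upper bound). *)
Definition ks_kr_max (r s x v : nat) : Prop :=
  (exists (T : finType) (e : rel T),
      simple_graph e /\ kcl e r <= x /\ kcl e s = v) /\
  (forall (T : finType) (e : rel T),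
      simple_graph e -> kcl e r <= x -> kcl e s <= v).

(* largest a with 'C(a, k) <= rem  (for k >= 1 such a satisfies a < rem + k + 1) *)
Definition maxbinom (k rem : nat) : nat :=
  \max_(a < rem + k + 1 | 'C(a, k) <= rem) a.

(* Greedy k-canonical representation of rem: list of pairs (a_j, j), j
   decreasing from k, stopping as soon as the remainder is 0. *)
Fixpoint greedy (k rem : nat) : seq (nat * nat) :=
  match k with
  | 0 => [::]
  | k'.+1 =>
      if rem == 0 then [::]
      else let a := maxbinom k rem in
           (a, k) :: greedy k' (rem - 'C(a, k))
  end.

Definition canon (r x : nat) : seq (nat * nat) := greedy r x.

Definition canon_shift (r s x : nat) : nat :=
  \sum_(p <- canon r x) 'C(p.1, p.2 + (s - r)).

(* Upper bound: the shadow of the s-cliques consists of (s-1)-cliques, so Kruskal-Katona,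
   iterated down to level r, shows that a graph with more than 'C(n, s) + 'C(m, s - 1),
   hence at least 'C(n, s) + 'C(m, s - 1) + 'C(s - 2, s - 2), s-cliques has at least
   'C(n, r) + 'C(m, r - 1) + 'C(s - 2, r - 2) > x r-cliques, because t < s - 2.
   Kruskal-Katona is Frankl's argument: shift the family towards a vertex v, so that the
   shadow of the sets avoiding v lies in the link of v, and induct on the ground set.
   Lower bound: K_n plus a vertex joined to m of its vertices.  For y between
   'C(n, r) + 'C(m, r - 1) and x, the tail of [y]^r after 'C(n, r) + 'C(m, r - 1) is below
   'C(t + 1, r - 2), and t < s - 2 makes all its terms vanish at level s. *)

From mathcomp Require Import all_boot zify.
Set Implicit Arguments. Unset Strict Implicit. Unset Printing Implicit Defensive.

Section Shadow.
Variable T : finType.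
Implicit Types (F G : {set {set T}}) (A B U : {set T}) (v x y : T).

Definition shadow F : {set {set T}} :=
  [set B | [exists A in F, exists y in A, B == A :\ y]].

Lemma shadowP F B :
  reflect (exists2 A, A \in F & exists2 y, y \in A & B = A :\ y) (B \in shadow F).
Proof.
rewrite inE; apply: (iffP exists_inP) => [[A AF /exists_inP[y yA /eqP->]]|[A AF [y yA ->]]].
  by exists A => //; exists y.
by exists A => //; apply/exists_inP; exists y.
Qed.

Lemma mem_shadow F A y : A \in F -> y \in A -> A :\ y \in shadow F.
Proof. by move=> AF yA; apply/shadowP; exists A => //; exists y. Qed.

Definition uniform_on U k F := forall A, A \in F -> A \subset U /\ #|A| = k.

Lemma setU1D1C x y v A : y != v -> v |: (A :\ y :\ x) = (v |: A :\ x) :\ y.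
Proof.
move=> yv; apply/setP => z; rewrite !inE.
by have [->|] := eqVneq z v; rewrite ?(eq_sym v y) ?(negPf yv) //= andbCA.
Qed.

Lemma setU1D1K x v A : v \in A -> x != v -> v |: (A :\ v :\ x) = A :\ x.
Proof.
by move=> vA xv; rewrite setDDl (setUC [set v] [set x]) -setDDl setD1K // !inE eq_sym xv.
Qed.

Definition compress_set x v F A : {set T} :=
  if [&& x \in A, v \notin A & v |: A :\ x \notin F] then v |: A :\ x else A.

Definition compress x v F := compress_set x v F @: F.

Definition compressed x v F :=
  forall A, A \in F -> x \in A -> v \notin A -> v |: A :\ x \in F.

Lemma compress_set_notin x v F A : v \notin compress_set x v F A -> compress_set x v F A = A.
Proof. by rewrite /compress_set; case: ifP => // _; rewrite setU11. Qed.

Lemma mem_compress_id x v F A :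
  A \in F -> ~~ [&& x \in A, v \notin A & v |: A :\ x \notin F] -> A \in compress x v F.
Proof. by move=> AF keep; apply/imsetP; exists A; rewrite // /compress_set (negPf keep). Qed.

Lemma mem_compress_v x v F A : A \in F -> v \in A -> A \in compress x v F.
Proof. by move=> AF vA; apply: mem_compress_id; rewrite // vA andbF. Qed.

Lemma mem_compress_notx x v F A : A \in F -> x \notin A -> A \in compress x v F.
Proof. by move=> AF xA; apply: mem_compress_id; rewrite // (negPf xA). Qed.

Lemma mem_compress_moved x v F A : A \in F -> x \in A -> v \notin A ->
  v |: A :\ x \notin F -> v |: A :\ x \in compress x v F.
Proof. by move=> AF xA vA A'F; apply/imsetP; exists A; rewrite // /compress_set xA vA A'F. Qed.

Lemma card_compress x v F : #|compress x v F| = #|F|.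
Proof.
apply: card_in_imset => A B AF BF; rewrite /compress_set.
case: ifP => [/and3P[xA vA A'F]|_]; case: ifP => [/and3P[xB vB B'F]|_] //; last first.
- by move=> E; rewrite -E AF in B'F.
- by move=> E; rewrite E BF in A'F.
move=> /(congr1 (fun C => C :\ v)); rewrite !setU1K ?in_setD1 ?(negPf vA) ?(negPf vB) ?andbF //.
by move=> /(congr1 (fun C => x |: C)); rewrite !setD1K.
Qed.

Lemma compress_compressed x v F : compressed x v (compress x v F).
Proof.
move=> _ /imsetP[A AF ->] xA' vA'; have E := compress_set_notin vA'.
rewrite E in xA' vA' *; move: E; rewrite /compress_set xA' vA' /=.
case: ifP => [_ E|/negbFE A'F _]; first by move: vA'; rewrite -E setU11.
by apply: mem_compress_v; rewrite // setU11.
Qed.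

Lemma compress_compressed_other x y v F : compressed y v F -> compressed y v (compress x v F).
Proof.
move=> cF _ /imsetP[A AF ->] yA' vA'; have E := compress_set_notin vA'.
by rewrite E in yA' vA' *; apply: mem_compress_v; rewrite ?cF ?setU11.
Qed.

Lemma shadow_compress x v F : shadow (compress x v F) \subset compress x v (shadow F).
Proof.
apply/subsetP => _ /shadowP[_ /imsetP[A AF ->] [y yA' ->]].
move: yA'; rewrite {1 2}/compress_set; case: ifP => [/and3P[xA vA A'F]|unmoved] yA'.
  have xv : x != v by apply: contraNneq vA => <-.
  have [<-|yv] := eqVneq v y.
    rewrite setU1K; last by rewrite in_setD1 (negPf vA) andbF.
    by apply: mem_compress_notx; rewrite ?mem_shadow ?setD11.
  have /setD1P[yx yA] : y \in A :\ x by move: yA'; rewrite in_setU1 eq_sym (negPf yv).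
  rewrite -setU1D1C 1?eq_sym //.
  case B'F: (v |: (A :\ y :\ x) \in shadow F).
    by apply: mem_compress_notx; rewrite // !inE eqxx (negPf xv).
  apply: mem_compress_moved; rewrite ?B'F ?mem_shadow //; first by rewrite !inE xA eq_sym yx.
  by rewrite !inE negb_and negbK vA orbT.
apply: mem_compress_id; first exact: mem_shadow.
apply/and3P => [[/setD1P[xy xA] vAy]]; apply/negP/negPn.
have [yv|yv] := eqVneq y v.
  by rewrite yv setU1D1K ?mem_shadow // -yv.
have vA : v \notin A by move: vAy; rewrite !inE eq_sym (negPf yv).
have A'F : v |: A :\ x \in F by apply/negbNE; move: unmoved; rewrite xA vA => /negbT.
by rewrite setU1D1C // mem_shadow // in_setU1 in_setD1 yA' andbT (eq_sym y x) xy orbT.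
Qed.

Lemma card_shadow_compress x v F : #|shadow (compress x v F)| <= #|shadow F|.
Proof. by rewrite -(card_compress x v (shadow F)) subset_leq_card ?shadow_compress. Qed.

Lemma uniform_compress U k x v F :
  v \in U -> uniform_on U k F -> uniform_on U k (compress x v F).
Proof.
move=> vU uF _ /imsetP[A AF ->]; have [sAU cA] := uF A AF.
rewrite /compress_set; case: ifP => // /and3P[xA vA _]; split.
  by rewrite subUset sub1set vU (subset_trans (subD1set A x)).
by rewrite cardsU1 in_setD1 (negPf vA) andbF (cardsD1 x A) xA in cA *.
Qed.

Lemma exists_compressed U k v F : v \in U -> uniform_on U k F ->
  exists2 G, uniform_on U k G &
    [/\ #|G| = #|F|, #|shadow G| <= #|shadow F| & forall x, compressed x v G].
Proof.
move=> vU uF.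
suff /(_ (enum T)) [G uG [cardG shG cG]] : forall xs : seq T, exists2 G, uniform_on U k G &
    [/\ #|G| = #|F|, #|shadow G| <= #|shadow F| & forall x, x \in xs -> compressed x v G].
  by exists G => //; split => // x; apply: cG; rewrite mem_enum.
elim=> [|x xs [G uG [cardG shG cG]]]; first by exists F.
exists (compress x v G); first exact: uniform_compress.
split; first by rewrite card_compress.
  exact: leq_trans (card_shadow_compress x v G) shG.
move=> y; rewrite inE => /predU1P[->|/cG]; first exact: compress_compressed.
exact: compress_compressed_other.
Qed.

Definition link v F := [set A :\ v | A in F & v \in A].

Definition deletion v F := [set A in F | v \notin A].

Lemma card_link_deletion v F : #|link v F| + #|deletion v F| = #|F|.
Proof.
rewrite card_in_imset => [|A B]; last first.
  by rewrite !inE => /andP[_ vA] /andP[_ vB] E; rewrite -(setD1K vA) -(setD1K vB) E.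
rewrite -(cardsID [set A : {set T} | v \in A] F).
by congr (_ + _); apply: eq_card => A; rewrite !inE andbC.
Qed.

Lemma uniform_link U k v F : uniform_on U k F -> uniform_on (U :\ v) k.-1 (link v F).
Proof.
move=> uF B /imsetP[A]; rewrite inE => /andP[AF vA] ->; have [sAU cA] := uF A AF.
by rewrite setSD // -cA (cardsD1 v A) vA.
Qed.

Lemma uniform_deletion U k v F : uniform_on U k F -> uniform_on (U :\ v) k (deletion v F).
Proof.
move=> uF A; rewrite inE => /andP[AF vA]; have [sAU cA] := uF A AF; split => //.
by apply/subsetP => z zA; rewrite in_setD1 (subsetP sAU) // andbT; apply: contraNneq vA => <-.
Qed.

Lemma shadow_deletion v F :
  (forall x, compressed x v F) -> shadow (deletion v F) \subset link v F.
Proof.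
move=> cF; apply/subsetP => B /shadowP[A]; rewrite inE => /andP[AF vA] [y yA ->].
apply/imsetP; exists (v |: A :\ y); first by rewrite inE setU11 cF.
by rewrite setU1K // in_setD1 (negPf vA) andbF.
Qed.

Lemma link_sub_deletion_shadow v F : link v F \subset deletion v (shadow F).
Proof.
apply/subsetP => B /imsetP[A]; rewrite inE => /andP[AF vA] ->.
by rewrite inE mem_shadow // setD11.
Qed.

Lemma shadow_link_sub v F : shadow (link v F) \subset link v (shadow F).
Proof.
apply/subsetP => B /shadowP[_ /imsetP[A + ->] [y /setD1P[yv yA] ->]].
rewrite inE => /andP[AF vA].
apply/imsetP; exists (A :\ y); first by rewrite inE mem_shadow // in_setD1 eq_sym yv.
by rewrite !setDDl setUC.
Qed.

Lemma card_link_shadow v F : #|link v F| + #|shadow (link v F)| <= #|shadow F|.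
Proof.
rewrite -(card_link_deletion v (shadow F)) addnC leq_add ?subset_leq_card //.
  exact: shadow_link_sub.
exact: link_sub_deletion_shadow.
Qed.

End Shadow.

Fixpoint binsum (l : seq nat) k : nat :=
  if l is a :: l' then 'C(a, k) + binsum l' k.-1 else 0.

Fixpoint cascade (l : seq nat) k ub : bool :=
  if l is a :: l' then [&& k <= a, a < ub, 0 < k & cascade l' k.-1 a] else true.

Lemma binsum_pascal l k ub : cascade l k ub ->
  binsum l k = binsum (map predn l) k + binsum (map predn l) k.-1.
Proof.
elim: l k ub => [//|a l IH] k ub /= /and4P[ka _ k0 cl].
case: k ka k0 cl => // k ka _ cl /=.
by rewrite (IH _ _ cl) -[in 'C(a, _)](ltn_predK ka) binS /=; lia.
Qed.

(* The term ['C(a_j, 0)] of a cascade of length [k] has no Pascal split, whence the [take]. *)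
Lemma binsum_pascal_pred l k ub : cascade l k ub ->
  binsum l k.-1 = binsum (map predn l) k.-1 + binsum (take k.-1 (map predn l)) k.-2.
Proof.
elim: l k ub => [//|a l IH] k ub /= /and4P[ka _ k0 cl].
case: k ka k0 cl => [//|[|k]] ka _ cl /=.
  by case: l {IH} cl => [|b l] /=; rewrite ?bin0 ?andbF.
by rewrite (IH _ _ cl) -[in 'C(a, _)](ltn_predK ka) binS /=; lia.
Qed.

Lemma binsum_take i l k : binsum (take i l) k <= binsum l k.
Proof. by elim: l i k => [|a l IH] [|i] k //=; rewrite leq_add2l. Qed.

Lemma cascade_take_pred l k ub : cascade l k ub -> cascade (take k.-1 (map predn l)) k.-1 ub.-1.
Proof.
elim: l k ub => [//|a l IH] k ub /= /and4P[ka aub k0 cl].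
case: k ka k0 cl => [//|[|k]] ka _ cl //=.
by rewrite (IH _ _ cl) andbT; apply/andP; split; lia.
Qed.

Lemma cascade_down l k ub : cascade l k ub -> size l < k -> cascade l k.-1 ub.
Proof.
elim: l k ub => [//|a l IH] k ub /= /and4P[ka aub k0 cl] sz.
by rewrite IH //; lia.
Qed.

Lemma binsum_pred_tight l k : cascade l k k.+1 -> binsum (map predn l) k.-1 <= k.
Proof.
elim: l k => [//|a l IH] k /= /and4P[ka ak k0 cl].
have Ea : a = k by lia.
subst a; case: k ka ak k0 cl => [//|k] _ _ _ cl /=; rewrite binn.
by have := IH _ cl; case: k cl => [|k] cl /=; lia.
Qed.

(* The number [binsum (map predn l) k + 1] has a [k]-cascade [L] whose [k.-1]-shadow bound is
   no smaller than that of [map predn l]: cut [l] at its first entry equal to its level. *)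
Lemma cascade_succ l k ub ub' : cascade l k ub -> k < ub' -> ub <= ub'.+1 ->
  exists2 L, cascade L k ub' &
    binsum L k <= (binsum (map predn l) k).+1 /\ binsum (map predn l) k.-1 <= binsum L k.-1.
Proof.
elim: l k ub ub' => [|a l IH] k ub ub' /=; first by exists [::].
move=> /and4P[ka aub k0 cl] kub' ubub'.
have [ak|ak] := eqVneq a k.
  subst a; exists [:: k]; rewrite /= ?leqnn ?kub' ?k0 ?binn ?addn0 //; split => //.
  case: k ka aub k0 cl {kub' ubub'} => [//|k] _ _ _ cl /=.
  by rewrite binSn add1n ltnS; apply: binsum_pred_tight.
have [L cL [bL1 bL2]] := IH k.-1 a a.-1 cl ltac:(lia) ltac:(lia).
by exists (a.-1 :: L); rewrite /= ?cL; [apply/and4P; split; lia | split; lia].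
Qed.

Theorem kruskal_katona (T : finType) (U : {set T}) k l ub (F : {set {set T}}) :
  cascade l k ub -> uniform_on U k F -> binsum l k <= #|F| -> binsum l k.-1 <= #|shadow F|.
Proof.
have [N] := ubnP #|U|; elim: N => // N IH in U k l ub F *; rewrite ltnS => UN.
case: l => [//|a l'] cl uF lF; set l := a :: l' in cl lF *.
have /and4P[ka aub k0 _] := cl.
have [A0 A0F] : exists A0, A0 \in F.
  by apply/set0Pn; rewrite -card_gt0 (leq_trans _ lF) //= (leq_trans _ (leq_addr _ _)) // bin_gt0.
have [sA0U cA0] := uF A0 A0F.
have [v vA0] : exists v, v \in A0 by apply/set0Pn; rewrite -card_gt0 cA0.
have vU : v \in U := subsetP sA0U v vA0.
have UvN : #|U :\ v| < N by rewrite (cardsD1 v U) vU in UN.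
have [G uG [cardG shG cG]] := exists_compressed vU uF.
have linkG : binsum (map predn l) k.-1 <= #|link v G|.
  rewrite leqNgt; apply/negP => small.
  have [L cL [bL1 bL2]] := cascade_succ cl (leq_ltn_trans ka aub) (leqnSn ub).
  have delG : binsum L k <= #|deletion v G|.
    by have := card_link_deletion v G; have := binsum_pascal cl; lia.
  have shdel := IH _ k L ub _ UvN cL (uniform_deletion (v := v) uG) delG.
  have := leq_trans bL2 (leq_trans shdel (subset_leq_card (shadow_deletion cG))).
  by rewrite leqNgt small.
have shlinkG : binsum (take k.-1 (map predn l)) k.-2 <= #|shadow (link v G)|.
  apply: (IH _ k.-1 _ ub.-1 _ UvN); [exact: cascade_take_pred | exact: uniform_link |].
  exact: leq_trans (binsum_take _ _ _) linkG.
have := card_link_shadow v G.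
by rewrite (binsum_pascal_pred cl); lia.
Qed.

Section Cliques.
Variables (T : finType) (e : rel T).

Definition cliques k := [set A : {set T} | (#|A| == k) && is_clique e A].

Lemma is_cliqueS (A B : {set T}) : B \subset A -> is_clique e A -> is_clique e B.
Proof.
move=> /subsetP sBA /forall_inP cA; apply/forall_inP => x xB; apply/forall_inP => y yB.
exact: (forall_inP (cA x (sBA x xB)) y (sBA y yB)).
Qed.

Lemma shadow_cliques k : shadow (cliques k) \subset cliques k.-1.
Proof.
apply/subsetP => _ /shadowP[A + [y yA ->]]; rewrite inE => /andP[/eqP cA clA].
by rewrite inE (is_cliqueS (subD1set A y)) // -cA (cardsD1 y A) yA andbT.
Qed.

Lemma kcl_cascade_shadow l k ub :
  cascade l k ub -> binsum l k <= kcl e k -> binsum l k.-1 <= kcl e k.-1.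
Proof.
move=> cl lk; apply: leq_trans (subset_leq_card (shadow_cliques k)).
apply: (kruskal_katona (U := [set: T]) cl _ lk) => A; rewrite inE => /andP[/eqP cA _].
by rewrite subsetT.
Qed.

Lemma kcl_cascade l r s ub : size l <= r <= s ->
  cascade l s ub -> binsum l s <= kcl e s -> binsum l r <= kcl e r.
Proof.
case/andP=> lr /subnK <-; elim: (s - r) => // d IH cl lk.
apply: IH; last exact: kcl_cascade_shadow cl lk.
by apply: cascade_down cl _; rewrite addSn ltnS (leq_trans lr) ?leq_addl.
Qed.

End Cliques.

Lemma ltn_bin_add a k : 0 < k -> a < 'C(a, k) + k.
Proof.
case: k => // k _; elim: a => [|a IH]; first by rewrite addnS.
rewrite binS; have [ka|ak] := leqP k a; last by lia.
by have := bin_gt0 a k; rewrite ka; lia.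
Qed.

Lemma maxbinomE k rem a : 0 < k -> 'C(a, k) <= rem < 'C(a.+1, k) -> maxbinom k rem = a.
Proof.
move=> k0 /andP[lo hi]; apply/eqP; rewrite eqn_leq; apply/andP; split.
  apply/bigmax_leqP => i Ci; rewrite leqNgt; apply/negP => ai.
  by have := leq_bin2l k ai; lia.
have ab : a < rem + k + 1 by have := ltn_bin_add a k0; lia.
exact: (bigmax_sup (Ordinal ab)).
Qed.

Lemma maxbinom_bounds k rem : 0 < k ->
  'C(maxbinom k rem, k) <= rem < 'C((maxbinom k rem).+1, k).
Proof.
move=> k0; have ex : exists a, 'C(a, k) <= rem by exists 0; rewrite bin0n; case: k k0.
have ub a : 'C(a, k) <= rem -> a <= rem + k by have := ltn_bin_add a k0; lia.
case: (ex_maxnP ex ub) => a lo amax.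
have hi : rem < 'C(a.+1, k) by rewrite ltnNge; apply/negP => /amax; lia.
by rewrite (maxbinomE k0 (a := a)) ?lo.
Qed.

Lemma greedy_cons_inv k rem a j l : greedy k rem = (a, j) :: l ->
  [/\ j = k, 0 < k, 0 < rem, 'C(a, k) <= rem < 'C(a.+1, k) & l = greedy k.-1 (rem - 'C(a, k))].
Proof.
case: k => [//|k] /=; case: eqP => // /eqP rem0 [<- <- <-].
by split; rewrite ?lt0n ?maxbinom_bounds.
Qed.

Lemma greedy_cons k rem a : 0 < rem -> 'C(a, k.+1) <= rem < 'C(a.+1, k.+1) ->
  greedy k.+1 rem = (a, k.+1) :: greedy k (rem - 'C(a, k.+1)).
Proof. by move=> rem0 bnd; rewrite /= (negPf (lt0n_neq0 rem0)) (maxbinomE _ bnd). Qed.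

Lemma leq_of_ltn_binS k rem a : 0 < rem -> rem < 'C(a.+1, k) -> k <= a.
Proof.
move=> rem0 hi; rewrite leqNgt; apply/negP => ak.
have [/bin_small C0|ka] := ltnP a.+1 k; first by lia.
have Ek : k = a.+1 by lia.
by move: hi; rewrite Ek binn; lia.
Qed.

Lemma greedy_below j rem c : rem < 'C(c, j) ->
  all (fun p : nat * nat => p.1 + j < c + p.2) (greedy j rem).
Proof.
elim: j rem c => [//|j IH] rem c hi /=; case: eqP => // /eqP rem0.
have /andP[lo hi'] := maxbinom_bounds rem (ltn0Sn j).
set a := maxbinom j.+1 rem in lo hi' *.
have ac : a < c by rewrite ltnNge; apply/negP => /(leq_bin2l j.+1); lia.
apply/andP; split; first by rewrite /=; lia.
have rest : rem - 'C(a, j.+1) < 'C(a, j) by move: hi'; rewrite binS; lia.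
by apply: sub_all (IH _ _ rest) => p /=; lia.
Qed.

Section ColexGraph.
Variables n m : nat.
Hypothesis mn : m <= n.

(* Its [k]-cliques are the first ['C(n, k) + 'C(m, k.-1)] [k]-sets in colex order: [K_n] on
   [0, ..., n-1] plus a vertex [n] joined to [0, ..., m-1]. *)
Definition colex_graph : rel 'I_n.+1 :=
  fun i j => (i != j) && ((maxn i j < n) || (minn i j < m)).

Lemma colex_graph_simple : simple_graph colex_graph.
Proof.
split; first by move=> i j; rewrite /colex_graph eq_sym maxnC minnC.
by move=> i; rewrite /colex_graph eqxx.
Qed.

Let top : 'I_n.+1 := ord_max.

Let low p := [set i : 'I_n.+1 | i < p].

Lemma card_low p : p <= n.+1 -> #|low p| = p.
Proof.
move=> pn; have inj : injective (widen_ord pn) by move=> a b /(congr1 val) E; apply: val_inj.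
rewrite -[RHS]card_ord -(card_imset _ inj).
apply: eq_card => i; rewrite inE; apply/idP/imsetP => [ip|[j _ ->]]; last exact: (ltn_ord j).
by exists (Ordinal ip) => //; apply: val_inj.
Qed.

Lemma neq_top i : (i != top) = (i < n).
Proof. by have := ltn_ord i; rewrite -(inj_eq val_inj) /=; lia. Qed.

Lemma colex_graphE i j :
  colex_graph i j = (i != j) && [|| (i != top) && (j != top), i < m | j < m].
Proof. by rewrite /colex_graph !neq_top gtn_max gtn_min. Qed.

Lemma colex_cliqueE A : is_clique colex_graph A = (top \notin A) || (A :\ top \subset low m).
Proof.
apply/idP/idP => [/forall_inP clA|].
  rewrite -implybE; apply/implyP => topA; apply/subsetP => i /setD1P[itop iA]; rewrite inE.
  have /forall_inP/(_ top topA) := clA i iA.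
  by rewrite colex_graphE itop eqxx /= (ltnNge n m) mn orbF.
move=> /orP[topA|sA]; apply/forall_inP => i iA; apply/forall_inP => j jA; apply/implyP => ij;
  rewrite colex_graphE ij /=.
  by apply/orP; left; apply/andP; split; apply: contraNneq topA => <-.
have [itop|itop] := eqVneq i top.
  have /(subsetP sA) : j \in A :\ top by rewrite in_setD1 -itop eq_sym ij.
  by rewrite inE => ->; rewrite !orbT.
have [jtop|//] := eqVneq j top.
have /(subsetP sA) : i \in A :\ top by rewrite in_setD1 itop.
by rewrite inE => ->.
Qed.

Lemma kcl_colex_graph k : 0 < k -> kcl colex_graph k = 'C(n, k) + 'C(m, k.-1).
Proof.
move=> k0; rewrite /kcl -(cardsID [set A : {set 'I_n.+1} | top \in A]) addnC.
congr (_ + _).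
  have lowE : low n = [set~ top] by apply/setP => i; rewrite !inE neq_top.
  rewrite -[n in 'C(n, _)](card_low (leqnSn n)) -cards_draws; apply: eq_card => A.
  rewrite !inE colex_cliqueE lowE subsetC sub1set inE.
  by case: (top \in A); rewrite ?andbF ?andbT.
rewrite -[m in 'C(m, _)](card_low (leqW mn)) -cards_draws.
have top_low (B : {set 'I_n.+1}) : B \subset low m -> top \notin B.
  by move=> /subsetP sB; apply/negP => /sB; rewrite inE ltnNge mn.
rewrite -(card_in_imset (f := fun B => top |: B)); last first.
  move=> B C; rewrite !inE => /andP[/top_low tB _] /andP[/top_low tC _] E.
  by rewrite -(setU1K tB) -(setU1K tC) E.
apply: eq_card => A; rewrite !inE colex_cliqueE; apply/idP/imsetP.
  move=> /andP[/andP[/eqP cA /orP[/negP//|sA]] topA].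
  exists (A :\ top); last by rewrite setD1K.
  by rewrite inE sA -cA (cardsD1 top A) topA eqxx.
move=> [B]; rewrite inE => /andP[sB /eqP cB] ->.
rewrite setU11 andbT cardsU1 (top_low _ sB) cB add1n prednK // eqxx /=.
by rewrite setU1K ?top_low.
Qed.

End ColexGraph.

Arguments colex_graph : clear implicits.

Lemma cascade_two_succ r s n m : 2 < r < s -> m < n ->
  exists2 l, cascade l s (n + s).+1 &
    [/\ size l <= r, binsum l s <= ('C(n, s) + 'C(m, s.-1)).+1 &
        'C(n, r) + 'C(m, r.-1) + 'C(s.-2, r.-2) <= binsum l r].
Proof.
case/andP=> r2 rs mn; have [r' Er] : exists r', r = r'.+3 by exists (r - 3); lia.
have [s' Es] : exists s', s = s'.+4 by exists (s - 4); lia.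
subst r s; have [sm|ms] := leqP s'.+3 m.
  by exists [:: n; m; s'.+2]; rewrite /= ?binn; [lia | split; lia].
have ms' : m <= s'.+2 := ms.
have [sn|ns] := leqP s'.+4 n.
  exists [:: n; s'.+3]; rewrite /= ?binn; first by lia.
  by rewrite (binS s'.+2 r'.+1); have := leq_bin2l r'.+2 ms'; split; lia.
exists [:: s'.+4]; rewrite /= ?binn; first by lia.
rewrite (binS s'.+3 r'.+2) (binS s'.+2 r'.+1).
by have := leq_bin2l r'.+2 ms'; have := leq_bin2l r'.+3 (ns : n <= s'.+3); split; lia.
Qed.

Lemma kcl_two_term_gt (T : finType) (e : rel T) r s n m : 2 < r < s -> m < n ->
  'C(n, s) + 'C(m, s.-1) < kcl e s -> 'C(n, r) + 'C(m, r.-1) + 'C(s.-2, r.-2) <= kcl e r.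
Proof.
move=> rs mn big; have [l cl [lr ls lr']] := cascade_two_succ rs mn.
apply: leq_trans lr' (kcl_cascade _ cl (leq_trans ls big)).
by case/andP: rs => _ /ltnW ->; rewrite lr.
Qed.

Lemma canon3_bounds r x n m t : canon r x = [:: (n, r); (m, r.-1); (t, r.-2)] ->
  [/\ 2 < r, r.-1 <= m < n, 'C(n, r) + 'C(m, r.-1) <= x,
      x < 'C(n.+1, r) /\ x - 'C(n, r) < 'C(m.+1, r.-1)
    & x < 'C(n, r) + 'C(m, r.-1) + 'C(t.+1, r.-2)].
Proof.
move=> E; have [_ _ x0 /andP[nlo nhi] E1] := greedy_cons_inv E.
have [_ _ x1 /andP[mlo mhi] E2] := greedy_cons_inv (esym E1).
have [_ r2 _ /andP[tlo thi] _] := greedy_cons_inv (esym E2).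
have r3 : 2 < r by lia.
have mr := leq_of_ltn_binS x1 mhi.
have mn : m < n.
  rewrite ltnNge; apply/negP => /(leq_bin2l r.-1).
  by move: nhi; rewrite -[in 'C(n.+1, _)](prednK (ltnW (ltnW r3))) binS prednK; lia.
by split; rewrite ?mr ?mn //; lia.
Qed.

Lemma canon_shift_window r s x y n m t : r < s -> t < s.-2 ->
  canon r x = [:: (n, r); (m, r.-1); (t, r.-2)] -> 'C(n, r) + 'C(m, r.-1) <= y <= x ->
  canon_shift r s y = 'C(n, s) + 'C(m, s.-1).
Proof.
move=> rs ts E /andP[ylo yx]; have [r3 /andP[mr mn] _ [nhi mhi] thi] := canon3_bounds E.
have [r' Er] : exists r', r = r'.+3 by exists (r - 3); lia.
subst r; change r'.+3.-2 with r'.+1 in *; change r'.+3.-1 with r'.+2 in *.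
have m0 : 0 < 'C(m, r'.+2) by rewrite bin_gt0.
have n0 : 0 < 'C(n, r'.+3) by rewrite bin_gt0; lia.
rewrite /canon_shift /canon (greedy_cons (a := n)); try lia.
rewrite (greedy_cons (a := m)); try lia.
rewrite !big_cons big_seq big1 => [|p].
  have -> : r'.+3 + (s - r'.+3) = s by lia.
  have -> : r'.+2 + (s - r'.+3) = s.-1 by lia.
  by rewrite addn0.
have rest : y - 'C(n, r'.+3) - 'C(m, r'.+2) < 'C(t.+1, r'.+1) by lia.
by move/(allP (greedy_below rest)) => pt; apply: bin_small; lia.
Qed.

Lemma ks_kr_max_window r s x y n m t : r < s -> t < s.-2 ->
  canon r x = [:: (n, r); (m, r.-1); (t, r.-2)] -> 'C(n, r) + 'C(m, r.-1) <= y <= x ->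
  ks_kr_max r s y ('C(n, s) + 'C(m, s.-1)).
Proof.
move=> rs ts E /andP[ylo yx]; have [r3 /andP[_ mn] _ _ thi] := canon3_bounds E.
split.
  exists 'I_n.+1, (colex_graph n m); split; first exact: colex_graph_simple.
  by rewrite !kcl_colex_graph ?(ltnW mn) ?ylo //; lia.
move=> T e _ er; rewrite leqNgt; apply/negP => big.
have r3s : 2 < r < s by rewrite r3.
by have := kcl_two_term_gt r3s mn big; have := leq_bin2l r.-2 ts; lia.
Qed.

Theorem theorem3 (r s x n m t w : nat) :
  2 <= r -> r < s ->
  canon r x = [:: (n, r); (m, r - 1); (t, r - 2)] ->
  'C(t, r - 2) = 'C(w, r - 1) ->
  t < s - 2 -> w < s - 1 ->
  (ks_kr_max r s x ('C(n, s) + 'C(m, s - 1)) /\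
   canon_shift r s x = 'C(n, s) + 'C(m, s - 1)) /\
  (forall y : nat, 'C(n, r) + 'C(m, r - 1) <= y -> y <= x ->
     ks_kr_max r s y ('C(n, s) + 'C(m, s - 1)) /\
     canon_shift r s y = 'C(n, s) + 'C(m, s - 1)).
Proof.
rewrite !subn1 !subn2 => _ rs E _ ts _.
have [_ _ xlo _ _] := canon3_bounds E.
have window y : 'C(n, r) + 'C(m, r.-1) <= y -> y <= x ->
    ks_kr_max r s y ('C(n, s) + 'C(m, s.-1)) /\
    canon_shift r s y = 'C(n, s) + 'C(m, s.-1).
  move=> ylo yx; have yw : 'C(n, r) + 'C(m, r.-1) <= y <= x by rewrite ylo.
  by split; [exact: ks_kr_max_window E yw | exact: canon_shift_window E yw].
by split; [exact: window | exact: window].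
Qed.
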